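(* If $\sigma^2<\infty$, then \[\lim_{m\to\infty}\mathbf{P}(N(m)=1\mid N(m)\ge1)=1.\]
   Context: $\xi$ is a random variable on $\{0,1,2,\dots\}$ with $\mathbf{P}(\xi=k)=p_k$, mean $\mu\in(0,1)$ and variance $\sigma^2>0$; $\xi^*$ has the size-biased law $\mathbf{P}(\xi^*=k)=kp_k/\mu$, $k\ge1$. For a rooted tree $T$, $\mathcal{H}(T)$ is its height. Let $(\mathcal{T}_j)_{j\ge1}$ be independent Galton–Watson trees with offspring law $\xi$, independent of $\xi^*$, and $N(m)=\sum_{j=1}^{\xi^*-1}\mathbf{1}_{\{\mathcal{H}(\mathcal{T}_j)\ge m\}}$. *)

From HB Require Import structures.
From mathcomp Require Import all_boot all_order all_algebra.
From mathcomp Require Import all_classical all_reals all_analysis.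
Set Implicit Arguments. Unset Strict Implicit. Unset Printing Implicit Defensive.
Import Order.TTheory GRing.Theory Num.Theory.
Local Open Scope classical_set_scope.
Local Open Scope ring_scope.

(* Ulam--Harris encoding of a (possibly infinite) rooted plane tree from its
   offspring numbers: [X u] is the number of children of the vertex [u]
   (a word [u : seq nat]).
   This is Neveu's construction of a Galton--Watson tree when the
   [X u] are i.i.d. with the offspring law. *)
Fixpoint in_tree_from (X : seq nat -> nat) (pre u : seq nat) : bool :=
  match u with
  | [::] => true
  | i :: u' => (i < X pre)%N && in_tree_from X (rcons pre i) u'
  end.

Definition in_tree (X : seq nat -> nat) (u : seq nat) : bool :=
  in_tree_from X [::] u.

(* H(T) >= m : the tree has a vertex at depth m (trees are prefix closed,
   the root has depth 0, H(T) = sup of the depths of vertices). *)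
Definition height_ge (X : seq nat -> nat) (m : nat) : Prop :=
  exists u : seq nat, size u = m /\ in_tree X u.

Definition mutually_independent {d : measure_display} {T : measurableType d}
  {R : realType} (P : probability T R) (I : eqType) (Y : I -> T -> nat) : Prop :=
  forall (s : seq I), uniq s -> forall B : I -> set nat,
    P [set w | forall i, i \in s -> B i (Y i w)] =
    (\prod_(i <- s) P [set w | B i (Y i w)])%E.

(* The random variables of the model are indexed by
   None            : xi^*
   Some (j, u)     : number of children of vertex u in the tree T_j. *)
Definition gw_index := option (nat * seq nat).

Definition Nm {T : Type} (Y : gw_index -> T -> nat) (m : nat) (w : T) : nat :=
  (\sum_(1 <= j < Y None w) asbool (height_ge (fun u => Y (Some (j, u)) w) m))%N.

From HB Require Import structures.
From mathcomp Require Import all_boot all_order all_algebra.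
From mathcomp Require Import all_classical all_reals all_analysis.
From mathcomp Require Import ring lra.
Import Order.TTheory GRing.Theory Num.Theory.
Import numFieldNormedType.Exports.
Local Open Scope classical_set_scope.
Local Open Scope ring_scope.
Set Implicit Arguments. Unset Strict Implicit. Unset Printing Implicit Defensive.

(* Write q_m = P(H(T) >= m) and pi_k = k p_k / mu = P(xi^* = k).  Given xi^* = k,
   N(m) counts which of the k - 1 independent trees T_1, ..., T_(k-1) reach height m, so
     P(N(m) >= 1) >= pi_k q_m  for every k >= 2,  and
     P(N(m) >= 2, xi^* = k) <= pi_k min(k q_m, k^2 q_m^2).
   Splitting the sum of the second bound at k = K gives
     P(N(m) >= 2) <= q_m (K q_m E[xi^*] + E[xi^*; xi^* >= K]),
   where E[xi^*] = (sigma^2 + mu^2) / mu is finite.  A tree of height m + 1 has a child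
   of the root carrying a subtree of height m, whence q_(m+1) <= mu q_m and q_m -> 0.
   Taking K, then m, large makes P(N(m) >= 2) / P(N(m) >= 1) small, and
   P(N(m) = 1) = P(N(m) >= 1) - P(N(m) >= 2).
   The independence of xi^* and of the trees, and the fact that every tree and subtree
   has the law of T, follow from the mutual independence of the offspring numbers by
   Dynkin's pi-lambda theorem applied to cylinder events of the path space. *)

Section probability_lemmas.
Context d (T : measurableType d) (R : realType) (P : probability T R).

Lemma probability_setD_sub (A B : set T) : measurable A -> measurable B ->
  A `<=` B -> P (B `\` A) = (P B - P A)%E.
Proof.
move=> mA mB AB; rewrite measureD ?(setIidr AB) //.
by rewrite ltey_eq fin_num_measure.
Qed.

Lemma probability_preimageID (X : Type) (g : T -> X) (E : set T) (A B : set X) :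
  measurable (g @^-1` A `&` E) -> measurable (g @^-1` B `&` E) -> A `<=` B ->
  P (g @^-1` (B `\` A) `&` E) = (P (g @^-1` B `&` E) - P (g @^-1` A `&` E))%E.
Proof.
move=> mA mB AB.
have sub : g @^-1` A `&` E `<=` g @^-1` B `&` E.
  by move=> w [Aw Ew]; split=> //; exact: AB.
rewrite -(probability_setD_sub mA mB sub); congr (P _); apply/seteqP; split=> w /=.
  by move=> [[Bw nAw] Ew]; split=> // -[].
by move=> [[Bw Ew] nAE]; split=> //; split=> // Aw; exact: nAE.
Qed.

Lemma probability_preimageI_bigcup (X : Type) (g : T -> X) (E : set T)
    (F : nat -> set X) :
  (forall n, measurable (g @^-1` F n `&` E)) -> nondecreasing_seq F ->
  (fun n => P (g @^-1` F n `&` E)) @ \oo --> P (g @^-1` (\bigcup_n F n) `&` E).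
Proof.
move=> mF ndF; rewrite preimage_bigcup setI_bigcupl.
apply: (nondecreasing_cvg_mu (mu := P)) => //; first exact: bigcup_measurable.
move=> a b ab; apply/subsetPset => w [Fw Ew]; split=> //.
by move/subsetPset: (ndF a b ab); apply.
Qed.

Lemma pi_lambda_preimage (X : Type) (G : set (set X)) (g1 g2 : T -> X)
    (E1 E2 : set T) (c : R) :
  setI_closed G -> G setT -> measurable E1 -> measurable E2 ->
  (forall H, <<s G >> H -> measurable (g1 @^-1` H)) ->
  (forall H, <<s G >> H -> measurable (g2 @^-1` H)) ->
  (forall C, G C -> P (g1 @^-1` C `&` E1) = (c%:E * P (g2 @^-1` C `&` E2))%E) ->
  forall H, <<s G >> H -> P (g1 @^-1` H `&` E1) = (c%:E * P (g2 @^-1` H `&` E2))%E.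
Proof.
move=> setIG GT mE1 mE2 mg1 mg2 eqG.
have [_ sigmaSD sigmaND _] := (sigma_algebraP (fun A _ => @subsetT _ A)).1
  (smallest_sigma_algebra setT G).
have m1 H : <<s G >> H -> measurable (g1 @^-1` H `&` E1).
  by move=> sH; apply: measurableI => //; exact: mg1.
have m2 H : <<s G >> H -> measurable (g2 @^-1` H `&` E2).
  by move=> sH; apply: measurableI => //; exact: mg2.
pose L := [set H | <<s G >> H /\
  P (g1 @^-1` H `&` E1) = (c%:E * P (g2 @^-1` H `&` E2))%E].
suff GL : <<s G >> `<=` L by move=> H /GL[].
apply: (lambda_system_subset setIG) => //; last first.
  by move=> C GC; split; [exact: sub_sigma_algebra | exact: eqG].
split => //.
- by split; [exact: sub_sigma_algebra | exact: eqG].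
- move=> B A AB [sB eB] [sA eA]; split; first exact: sigmaSD.
  rewrite (probability_preimageID (m1 _ sA) (m1 _ sB) AB).
  rewrite (probability_preimageID (m2 _ sA) (m2 _ sB) AB) eA eB muleBr //.
  by rewrite fin_num_adde_defr // fin_num_measure //; exact: m2.
- move=> F ndF LF; have sF n : <<s G >> (F n) by have [] := LF n.
  split; first exact: sigmaND.
  have lim12 : (fun n => P (g1 @^-1` F n `&` E1)) @ \oo -->
      (c%:E * P (g2 @^-1` (\bigcup_n F n) `&` E2))%E.
    apply: cvg_trans (cvgeZl (y := c%:E) (fin_numE _)
      (probability_preimageI_bigcup (fun n => m2 _ (sF n)) ndF)).
    by apply: near_eq_cvg; apply: nearW => n /=; have [_ ->] := LF n.
  exact: cvg_unique (probability_preimageI_bigcup (fun n => m1 _ (sF n)) ndF) lim12.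
Qed.

Lemma pi_lambda_indep (G : set (set T)) (E : set T) :
  setI_closed G -> G setT -> <<s G >> `<=` measurable -> measurable E ->
  (forall C, G C -> P (C `&` E) = (P C * P E)%E) ->
  forall A, <<s G >> A -> P (A `&` E) = (P A * P E)%E.
Proof.
move=> setIG GT mG mE indepG A GA.
have fE : P E \is a fin_num by rewrite fin_num_measure.
rewrite muleC -(fineK fE) -[in RHS](setIT A).
apply: (pi_lambda_preimage (g1 := id) (g2 := id) setIG GT) => // C GC.
by rewrite setIT fineK // muleC indepG.
Qed.

Lemma eq_law_nat (X1 X2 : T -> nat) :
  (forall k, measurable [set w | X1 w = k]) ->
  (forall k, measurable [set w | X2 w = k]) ->
  (forall k, P [set w | X1 w = k] = P [set w | X2 w = k]) ->
  forall B : set nat, P [set w | B (X1 w)] = P [set w | B (X2 w)].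
Proof.
move=> mX1 mX2 eqX B.
have E (X : T -> nat) : [set w | B (X w)] = \bigcup_(k in B) [set w | X w = k].
  by apply/seteqP; split=> w /=; [move=> h; exists (X w) | move=> [k Bk ->]].
have tE (X : T -> nat) : trivIset B (fun k => [set w | X w = k]).
  by move=> a b _ _ [w [/= <- <-]].
rewrite !E !measure_bigcup //; first by apply: eq_eseriesr => k _; exact: eqX.
Qed.

Lemma measure_le_sum_level_sets (X : T -> nat) (A : set T) :
  measurable A -> (forall k, measurable [set w | X w = k]) ->
  (P A <= \sum_(k <oo) P (A `&` [set w | X w = k]))%E.
Proof.
move=> mA mX; apply: measure_sigma_subadditive => //.
- by move=> k; exact: measurableI.
- by move=> w Aw; exists (X w).
Qed.

Lemma measure_le_cover (I : eqType) (r : seq I) (F : I -> set T) (A : set T) (c : R) :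
  measurable A -> (forall i, measurable (F i)) ->
  (forall w, A w -> exists2 i, i \in r & F i w) ->
  (forall i, i \in r -> (P (F i) <= c%:E)%E) -> (P A <= ((size r)%:R * c)%:E)%E.
Proof.
move=> + mF; elim: r A => [|i r IHr] A mA cover Fc.
  rewrite (_ : A = set0) ?measure0 ?mul0r //.
  by apply/seteqP; split=> // w /cover[].
rewrite (measureDI P mA (mF i)) /= -addn1 natrD mulrDl mul1r EFinD.
apply: leeD.
  apply: IHr => [|w [Aw nFw]|j jr]; first exact: measurableD.
    by have [j] := cover w Aw; rewrite inE => /orP[/eqP -> // | jr Fj]; exists j.
  by apply: Fc; rewrite inE jr orbT.
apply: le_trans (Fc i (mem_head _ _)); apply: le_measure; rewrite ?inE //.
exact: measurableI.
Qed.

Lemma measurable_count (I : Type) (E : I -> set T) : (forall i, measurable (E i)) ->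
  forall (r : seq I) (Q : set nat),
  measurable [set w | Q (\sum_(i <- r) asbool (E i w))%N].
Proof.
move=> mE; elim=> [|i r IHr] Q.
  rewrite (_ : [set _ | _] = [set _ | Q 0%N]); last first.
    by apply/seteqP; split=> w /=; rewrite big_nil.
  have [Q0|nQ0] := pselect (Q 0%N).
    by rewrite (_ : [set _ | Q 0%N] = setT) //; apply/seteqP; split.
  by rewrite (_ : [set _ | Q 0%N] = set0) //; apply/seteqP; split.
rewrite (_ : [set w | _] =
    (E i `&` [set w | Q (\sum_(j <- r) asbool (E j w))%N.+1]) `|`
    (~` E i `&` [set w | Q (\sum_(j <- r) asbool (E j w))%N])).
  apply: measurableU; apply: measurableI.
  - exact: mE.
  - exact: (IHr (fun n => Q n.+1)).
  - exact/measurableC/mE.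
  - exact: IHr.
apply/seteqP; split=> w /=; rewrite big_cons; case: asboolP => Eiw /=.
- by left.
- by right.
- by case=> -[].
- by case=> -[].
Qed.

End probability_lemmas.

Section cylinders.
Context (Omega : Type) (I : eqType) (Z : I -> Omega -> nat).

Definition cylinder_event (s : seq I) (B : I -> set nat) : set Omega :=
  [set w | forall i, i \in s -> B i (Z i w)].

Definition cylinders (D : set I) : set (set Omega) :=
  [set E | exists s B, (forall i, i \in s -> D i) /\ E = cylinder_event s B].

Lemma cylindersT D : cylinders D setT.
Proof. by exists [::], (fun _ => setT); split=> //; apply/seteqP; split. Qed.

Lemma sigma_cylinders_level D i k : D i -> <<s cylinders D >> [set w | Z i w = k].
Proof.
move=> Di; apply: sub_sigma_algebra; exists [:: i], (fun _ => [set k]); split.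
  by move=> j; rewrite inE => /eqP ->.
apply/seteqP; split=> w /=; last by apply; rewrite inE.
by move=> Zk j; rewrite inE => /eqP ->.
Qed.

Lemma cylinders_setI D : setI_closed (cylinders D).
Proof.
move=> _ _ [s1 [B1 [s1D ->]]] [s2 [B2 [s2D ->]]].
exists (s1 ++ s2), (fun i => [set x | (i \in s1 -> B1 i x) /\ (i \in s2 -> B2 i x)]).
split; first by move=> i; rewrite mem_cat => /orP[/s1D | /s2D].
apply/seteqP; split=> w /=.
  by move=> [h1 h2] i _; split; [exact: h1 | exact: h2].
move=> h; split=> i si; have /h[] : i \in s1 ++ s2 by rewrite mem_cat si ?orbT.
  by move=> + _; apply.
by move=> _; apply.
Qed.

Lemma sub_cylinders (D1 D2 : set I) : D1 `<=` D2 -> cylinders D1 `<=` cylinders D2.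
Proof. by move=> D12 _ [s [B [sD ->]]]; exists s, B; split=> // i /sD /D12. Qed.

Lemma sub_sigma_cylinders (D1 D2 : set I) :
  D1 `<=` D2 -> <<s cylinders D1 >> `<=` <<s cylinders D2 >>.
Proof. by move=> D12; apply: sub_sigma_algebra2; exact: sub_cylinders. Qed.

End cylinders.

Definition path_sigma (J : eqType) : set (set (J -> nat)) :=
  <<s cylinders (fun u (f : J -> nat) => f u) setT >>.

Section independent_coordinates.
Context d (T : measurableType d) (R : realType) (P : probability T R).
Context (I : eqType) (Y : I -> T -> nat).
Hypothesis mY : forall i k, measurable [set w | Y i w = k].
Hypothesis indepY : mutually_independent P Y.

Lemma measurable_coord i (B : set nat) : measurable [set w | B (Y i w)].
Proof.
rewrite [X in measurable X](_ : _ = \bigcup_(k in B) [set w | Y i w = k]).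
  by apply: bigcup_measurable => k _; exact: mY.
by apply/seteqP; split=> w /=; [move=> h; exists (Y i w) | move=> [k Bk ->]].
Qed.

Lemma measurable_cylinder_event s B : measurable (cylinder_event Y s B).
Proof.
elim: s => [|i s IHs].
  by rewrite (_ : cylinder_event Y [::] B = setT) //; apply/seteqP.
rewrite (_ : cylinder_event Y (i :: s) B =
    [set w | B i (Y i w)] `&` cylinder_event Y s B).
  by apply: measurableI => //; exact: measurable_coord.
apply/seteqP; split=> w /=.
  by move=> h; split=> [|j js]; apply: h; rewrite inE ?eqxx ?js ?orbT.
by move=> [Bi Bs] j; rewrite inE => /orP[/eqP -> | /Bs].
Qed.

Lemma sigma_cylinders_measurable D : <<s cylinders Y D >> `<=` measurable.
Proof.
apply: smallest_sub; first exact: sigma_algebra_measurable.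
by move=> _ [s [B [_ ->]]]; exact: measurable_cylinder_event.
Qed.

Lemma probability_cylinder_event s B : P (cylinder_event Y s B) =
  (\prod_(i <- undup s) P [set w | B i (Y i w)])%E.
Proof.
rewrite -indepY ?undup_uniq //; congr (P _).
by apply/seteqP; split=> w /= h i; [rewrite mem_undup | rewrite -mem_undup]; exact: h.
Qed.

Lemma cylinders_indep (D1 D2 : set I) : (forall i, D1 i -> ~ D2 i) ->
  forall E1 E2, cylinders Y D1 E1 -> cylinders Y D2 E2 ->
  P (E1 `&` E2) = (P E1 * P E2)%E.
Proof.
move=> D12 _ _ [s1 [B1 [s1D ->]]] [s2 [B2 [s2D ->]]].
have s12 i : i \in s1 -> i \in s2 -> False by move=> /s1D /D12 + /s2D.
pose B i := if i \in s1 then B1 i else B2 i.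
have -> : cylinder_event Y s1 B1 `&` cylinder_event Y s2 B2 =
    cylinder_event Y (undup s1 ++ undup s2) B.
  apply/seteqP; split=> w /=.
    move=> [h1 h2] i; rewrite mem_cat !mem_undup /B.
    by case: ifP => [/h1 // | _ /orP[] //]; exact: h2.
  move=> h; split=> i si; have := h i; rewrite mem_cat !mem_undup si ?orbT /B => /(_ isT).
    by rewrite si.
  by case: ifP => // /s12 /(_ si).
have uniq12 : uniq (undup s1 ++ undup s2).
  rewrite cat_uniq !undup_uniq andbT /=; apply/hasPn => i.
  by rewrite !mem_undup => i2; apply/negP => /s12 /(_ i2).
rewrite !probability_cylinder_event (undup_id uniq12) big_cat /=; congr (_ * _)%E.
- by apply: eq_big_seq => i; rewrite mem_undup /B => ->.
- apply: eq_big_seq => i; rewrite mem_undup /B.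
  by case: ifP => // /s12 /[apply].
Qed.

Lemma sigma_cylinders_indep (D1 D2 : set I) : (forall i, D1 i -> ~ D2 i) ->
  forall A1 A2, <<s cylinders Y D1 >> A1 -> <<s cylinders Y D2 >> A2 ->
  P (A1 `&` A2) = (P A1 * P A2)%E.
Proof.
move=> D12 A1 A2 sA1 sA2.
have indep_cylinder C2 : cylinders Y D2 C2 ->
    forall A, <<s cylinders Y D1 >> A -> P (A `&` C2) = (P A * P C2)%E.
  move=> cC2; apply: pi_lambda_indep.
  - exact: cylinders_setI.
  - exact: cylindersT.
  - exact: sigma_cylinders_measurable.
  - by case: cC2 => s [B [_ ->]]; exact: measurable_cylinder_event.
  - by move=> C cC; exact: cylinders_indep cC cC2.
rewrite setIC muleC; apply: (pi_lambda_indep _ _ _ _ _ sA2).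
- exact: cylinders_setI.
- exact: cylindersT.
- exact: sigma_cylinders_measurable.
- exact: sigma_cylinders_measurable sA1.
- by move=> C cC; rewrite setIC muleC; exact: indep_cylinder.
Qed.

Lemma sigma_cylinders_indep3 (D1 D2 D3 : set I) :
  (forall i, D1 i -> ~ D2 i) -> (forall i, D1 i -> ~ D3 i) ->
  (forall i, D2 i -> ~ D3 i) ->
  forall A1 A2 A3, <<s cylinders Y D1 >> A1 -> <<s cylinders Y D2 >> A2 ->
  <<s cylinders Y D3 >> A3 -> P (A1 `&` A2 `&` A3) = (P A1 * P A2 * P A3)%E.
Proof.
move=> D12 D13 D23 A1 A2 A3 sA1 sA2 sA3.
have sA23 : <<s cylinders Y (D2 `|` D3) >> (A2 `&` A3).
  have [_ _ _ sigmaI] := (sigma_algebraP (fun A _ => @subsetT _ A)).1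
    (smallest_sigma_algebra setT (cylinders Y (D2 `|` D3))).
  by apply: sigmaI; [move: sA2 | move: sA3]; apply: sub_sigma_cylinders => i Di;
    [left | right].
rewrite -setIA (sigma_cylinders_indep _ sA1 sA23).
  by rewrite (sigma_cylinders_indep D23 sA2 sA3) muleA.
by move=> i D1i [/(D12 i D1i) | /(D13 i D1i)].
Qed.

Definition subfamily (J : Type) (phi : J -> I) (w : T) : J -> nat := fun u => Y (phi u) w.

Lemma subfamily_cylinder (J : eqType) (phi : J -> I) s B :
  subfamily phi @^-1` cylinder_event (fun u (f : J -> nat) => f u) s B =
  cylinder_event Y (map phi s)
    (fun i => [set x | forall u, u \in s -> phi u = i -> B u x]).
Proof.
apply/seteqP; split=> w /=; first by move=> h _ /mapP[u su ->] v sv <-; exact: h.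
by move=> h u su; apply: (h (phi u)) => //; exact: map_f.
Qed.

Lemma sigma_subfamily (J : eqType) (phi : J -> I) H :
  path_sigma H -> <<s cylinders Y (range phi) >> (subfamily phi @^-1` H).
Proof.
move=> sH; rewrite -[_ @^-1` _]setTI; move: H sH.
apply: smallest_sub; first exact/sigma_algebra_image/smallest_sigma_algebra.
move=> _ [s [B [_ ->]]]; rewrite /image_set_system /= setTI subfamily_cylinder.
apply: sub_sigma_algebra; do 2 eexists; split; last reflexivity.
by move=> _ /mapP[u _ ->]; exists u.
Qed.

Lemma measurable_subfamily (J : eqType) (phi : J -> I) H :
  path_sigma H -> measurable (subfamily phi @^-1` H).
Proof. by move=> sH; apply: sigma_cylinders_measurable; exact: sigma_subfamily. Qed.

Lemma same_law_subfamily (J : eqType) (phi psi : J -> I) :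
  injective phi -> injective psi ->
  (forall u k, P [set w | Y (phi u) w = k] = P [set w | Y (psi u) w = k]) ->
  forall H, path_sigma H -> P (subfamily phi @^-1` H) = P (subfamily psi @^-1` H).
Proof.
move=> iphi ipsi eq_law H sH.
have P_cylinder (th : J -> I) s B : injective th ->
    P (subfamily th @^-1` cylinder_event (fun u (f : J -> nat) => f u) s B) =
    (\prod_(u <- undup s) P [set w | B u (Y (th u) w)])%E.
  move=> ith; rewrite subfamily_cylinder probability_cylinder_event.
  rewrite undup_map_inj // big_map.
  apply: eq_big_seq => u; rewrite mem_undup => su; congr (P _).
  by apply/seteqP; split=> w /=; [apply | move=> Bw v _ /ith ->].
have cylinder_eq C : cylinders (fun u (f : J -> nat) => f u) setT C ->
    P (subfamily phi @^-1` C `&` setT) = (1%:E * P (subfamily psi @^-1` C `&` setT))%E.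
  move=> [s [B [_ ->]]]; rewrite !setIT mul1e !P_cylinder //.
  by apply: eq_bigr => u _; apply: eq_law_nat => //; exact: eq_law.
have := pi_lambda_preimage (cylinders_setI (D := setT)) (cylindersT _ setT)
  measurableT measurableT
  (fun _ sH => measurable_subfamily phi sH) (fun _ sH => measurable_subfamily psi sH)
  cylinder_eq sH.
by rewrite !setIT mul1e.
Qed.

End independent_coordinates.

Lemma sum_bool_gt0 (I : eqType) (r : seq I) (b : pred I) :
  (0 < \sum_(i <- r) b i)%N -> exists2 i, i \in r & b i.
Proof.
rewrite lt0n sum_nat_seq_neq0 => /hasP[i ir /= bi].
by exists i => //; case: (b i) bi.
Qed.

Lemma sum_bool_gt1 (I : eqType) (r : seq I) (b : pred I) : uniq r ->
  (1 < \sum_(i <- r) b i)%N -> exists i j, [/\ i \in r, j \in r, i != j, b i & b j].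
Proof.
move=> ur r2; have [i ir bi] := sum_bool_gt0 (ltnW r2).
move: r2; rewrite (bigD1_seq i) //= bi ltnS -big_filter => /sum_bool_gt0[j].
by rewrite mem_filter => /andP[ji jr] bj; exists i, j; split; rewrite // eq_sym.
Qed.

Lemma in_tree_from_cat (f : seq nat -> nat) pre pre' u :
  in_tree_from f (pre ++ pre') u = in_tree_from (fun v => f (pre ++ v)) pre' u.
Proof. by elim: u pre' => [|i u IHu] pre' //=; rewrite rcons_cat IHu. Qed.

Lemma in_tree_fromE (f : seq nat -> nat) pre u :
  in_tree_from f pre u <->
  (forall k, (k < size u)%N -> (nth 0 u k < f (pre ++ take k u))%N).
Proof.
elim: u pre => [|i u IHu] pre /=; first by split.
split.
  move=> /andP[ilt /IHu h] [|k] /=; first by rewrite cats0.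
  by rewrite ltnS => /h; rewrite -cat_rcons.
move=> h; apply/andP; split; first by have := h 0%N isT; rewrite cats0.
by apply/IHu => k ks; have := h k.+1 ks; rewrite /= -cat_rcons.
Qed.

Lemma height_ge_S (f : seq nat -> nat) m : height_ge f m.+1 ->
  exists2 i, (i < f [::])%N & height_ge (fun v => f (i :: v)) m.
Proof.
move=> [[|i u] [//= /eqP]]; rewrite eqSS => /eqP su.
rewrite /in_tree /= => /andP[ilt hu]; exists i => //; exists u; split => //.
by move: hu; rewrite /in_tree -[[:: i]]cats0 in_tree_from_cat.
Qed.

Definition height_at_least (m : nat) : set (seq nat -> nat) := [set f | height_ge f m].

Lemma path_sigma_in_tree u : path_sigma [set f | in_tree f u].
Proof.
apply: sub_sigma_algebra.
exists [seq take k u | k <- iota 0 (size u)],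
  (fun v => [set x | forall k, (k < size u)%N -> take k u = v -> (nth 0 u k < x)%N]).
split=> //; apply/seteqP; split=> f /=.
  by move=> /in_tree_fromE h _ /mapP[k _ ->] j ju <-; apply: h.
move=> h; apply/in_tree_fromE => k ku.
by apply: (h (take k u)) => //; apply/mapP; exists k => //; rewrite mem_iota.
Qed.

Lemma path_sigma_height_at_least m : path_sigma (height_at_least m).
Proof.
pose F n : set (seq nat -> nat) := if @unpickle (seq nat) n is Some u then
  if size u == m then [set f | in_tree f u] else set0 else set0.
have -> : height_at_least m = \bigcup_n F n.
  apply/seteqP; split=> f /=.
    by move=> [u [su hu]]; exists (pickle u) => //; rewrite /F pickleK su eqxx.
  move=> [n _]; rewrite /F; case: (unpickle n) => // u.
  by case: eqP => // su hu; exists u.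
apply: sigma_algebra_bigcup => n; rewrite /F.
case: (unpickle n) => [u|]; last exact: sigma_algebra0.
by case: eqP => _; [exact: path_sigma_in_tree | exact: sigma_algebra0].
Qed.

Lemma eseries_EFin (R : realType) (f : nat -> R) (l : R) :
  series f @ \oo --> l -> (\sum_(k <oo) (f k)%:E)%E = l%:E.
Proof.
move=> cvg_f; apply/cvg_lim => //.
rewrite (_ : (fun n => _) = EFin \o series f).
  by apply: cvg_comp cvg_f _; exact: cvg_id.
by apply/funext => n /=; rewrite sumEFin.
Qed.

Lemma cvg_series_tail (R : realType) (g : nat -> R) (S : R) K :
  series g @ \oo --> S ->
  series (fun k => if (K <= k)%N then g k else 0) @ \oo --> S - series g K.
Proof.
move=> cvg_g; apply: cvg_trans (cvgB cvg_g (cvg_cst (series g K))).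
apply: near_eq_cvg; near=> n.
have Kn : (K <= n)%N by near: n; exists K.
have split (f : nat -> R) :
    \sum_(0 <= k < n) f k = \sum_(0 <= k < K) f k + \sum_(K <= k < n) f k.
  exact: big_cat_nat.
rewrite /series /= !fctE !split addrAC subrr add0r.
rewrite [X in _ = X + _]big1_seq ?add0r; last first.
  by move=> k /andP[_]; rewrite mem_index_iota => /andP[_ kK]; rewrite leqNgt kK.
by apply: eq_big_seq => k; rewrite mem_index_iota => /andP[->].
Unshelve. all: by end_near. Qed.

Lemma series_le_lim (R : realType) (u : nat -> R) (S : R) :
  (forall k, 0 <= u k) -> series u @ \oo --> S -> forall n, series u n <= S.
Proof.
move=> u_ge0 cvg_u n; rewrite -(cvg_lim _ cvg_u) //.
apply: nondecreasing_cvgn_le; last by apply/cvg_ex; exists S.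
by move=> i j ij; rewrite /series /= (big_cat_nat (leq0n i) ij) lerDl sumr_ge0.
Qed.

Definition size_biased (R : realType) (p : nat -> R) (mu : R) (k : nat) : R :=
  k%:R * p k / mu.

Lemma size_biased_mean_cvg (R : realType) (p : nat -> R) (mu sigma2 : R) : mu != 0 ->
  series p @ \oo --> (1 : R) ->
  series (fun k => k%:R * p k) @ \oo --> mu ->
  series (fun k => (k%:R - mu) ^+ 2 * p k) @ \oo --> sigma2 ->
  series (fun k => k%:R * size_biased p mu k) @ \oo --> (sigma2 + mu ^+ 2) / mu.
Proof.
move=> mu0 sum_p mean_p var_p.
have -> : series (fun k => k%:R * size_biased p mu k) =
    (fun n => (series (fun k => (k%:R - mu) ^+ 2 * p k) n +
      2 * mu * series (fun k => k%:R * p k) n - mu ^+ 2 * series p n) / mu).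
  apply/funext => n; rewrite /series /= !big_distrr /= -sumrN -!big_split /= mulr_suml.
  by apply: eq_bigr => k _; rewrite /size_biased; field.
apply: cvgMr_tmp; rewrite (_ : sigma2 + mu ^+ 2 = sigma2 + 2 * mu * mu - mu ^+ 2 * 1).
  by apply: cvgB; [apply: cvgD => //; exact: cvgMl_tmp | exact: cvgMl_tmp].
by rewrite mulr1; ring.
Qed.

Lemma ratio_cvg0 (R : realType) (a c q tail : nat -> R) (S pi : R) :
  0 < pi -> 0 <= S -> q @ \oo --> 0 -> tail @ \oo --> 0 ->
  (forall m, 0 <= q m) -> (forall K, 0 <= tail K) ->
  (forall m, 0 < a m) -> (forall m, 0 <= c m) ->
  (forall m, pi * q m <= a m) ->
  (forall m K, c m <= q m * (K%:R * q m * S + tail K)) ->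
  (fun m => c m / a m) @ \oo --> 0.
Proof.
move=> pi_gt0 S_ge0 q0 tail0 q_ge0 tail_ge0 a_gt0 c_ge0 a_ge c_le.
have ratio_le m K : c m / a m <= (K%:R * q m * S + tail K) / pi.
  have X_ge0 : 0 <= K%:R * q m * S + tail K by rewrite addr_ge0 // !mulr_ge0.
  rewrite ler_pdivrMr // mulrAC ler_pdivlMr //.
  have := c_le m K; have := a_ge m; have := q_ge0 m; nra.
apply/cvgrPdist_le => e e_gt0.
have e2_gt0 : 0 < e * pi / 2 by rewrite divr_gt0 // mulr_gt0.
have [K _ tailK] := (cvgrPdist_le _ _).1 tail0 _ e2_gt0.
have tK : tail K <= e * pi / 2.
  by have := tailK K (leqnn K); rewrite sub0r normrN ger0_norm.
have qKS : (fun m => K%:R * S * q m) @ \oo --> 0.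
  by rewrite -(mulr0 (K%:R * S)); exact: cvgMl_tmp.
have [M _ qM] := (cvgrPdist_le _ _).1 qKS _ e2_gt0.
near=> m.
have /qM : (M <= m)%N by near: m; exists M.
rewrite sub0r normrN ger0_norm ?mulr_ge0 // => qm.
have ca_ge0 : 0 <= c m / a m by rewrite divr_ge0 // ltW.
rewrite sub0r normrN ger0_norm //.
apply: le_trans (ratio_le m K) _; rewrite ler_pdivrMr //; nra.
Unshelve. all: by end_near. Qed.

Section galton_watson.
Context d (T : measurableType d) (R : realType) (P : probability T R).
Context (p : nat -> R) (mu : R) (Y : gw_index -> T -> nat).
Hypothesis p_ge0 : forall k, 0 <= p k.
Hypothesis mean_p : series (fun k => k%:R * p k) @ \oo --> mu.
Hypothesis mu_gt0 : 0 < mu.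
Hypothesis mY : forall i k, measurable [set w | Y i w = k].
Hypothesis indepY : mutually_independent P Y.
Hypothesis law_star : forall k, P [set w | Y None w = k] = (size_biased p mu k)%:E.
Hypothesis law_tree : forall j u k, P [set w | Y (Some (j, u)) w = k] = (p k)%:E.

Definition tree_index (j : nat) (u : seq nat) : gw_index := Some (j, u).
Definition subtree_index (j i : nat) (u : seq nat) : gw_index := Some (j, i :: u).

(* Definitionally the event summed in [Nm Y m]. *)
Definition tree_height_ge (j m : nat) : set T :=
  subfamily Y (tree_index j) @^-1` height_at_least m.

Definition survival (m : nat) : R := fine (P (tree_height_ge 1 m)).

Lemma sigma_tree_height_ge j m :
  <<s cylinders Y (range (tree_index j)) >> (tree_height_ge j m).
Proof. apply: sigma_subfamily; exact: path_sigma_height_at_least. Qed.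

Lemma measurable_tree_height_ge j m : measurable (tree_height_ge j m).
Proof. apply: measurable_subfamily => //; exact: path_sigma_height_at_least. Qed.

Lemma P_tree_height_ge j m : P (tree_height_ge j m) = (survival m)%:E.
Proof.
rewrite /survival fineK; last first.
  by rewrite fin_num_measure //; exact: measurable_tree_height_ge.
apply: same_law_subfamily => //; last exact: path_sigma_height_at_least.
- by move=> u v [].
- by move=> u v [].
- by move=> u k; rewrite !law_tree.
Qed.

Lemma P_subtree_height_ge j i m :
  P (subfamily Y (subtree_index j i) @^-1` height_at_least m) = (survival m)%:E.
Proof.
rewrite -(P_tree_height_ge 1); apply: same_law_subfamily => //.
- by move=> u v [].
- by move=> u v [].
- by move=> u k; rewrite !law_tree.
- exact: path_sigma_height_at_least.
Qed.

Lemma survival_ge0 m : 0 <= survival m.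
Proof. exact: fine_ge0. Qed.

Lemma survival_le1 m : survival m <= 1.
Proof.
rewrite -lee_fin -(P_tree_height_ge 1); apply: probability_le1.
exact: measurable_tree_height_ge.
Qed.

Lemma P_root_subtree j i k m :
  P ([set w | Y (Some (j, [::])) w = k] `&`
     subfamily Y (subtree_index j i) @^-1` height_at_least m) = (p k * survival m)%:E.
Proof.
rewrite (@sigma_cylinders_indep _ _ _ _ _ _ mY indepY [set Some (j, [::])]
  (range (subtree_index j i))).
- by rewrite law_tree P_subtree_height_ge.
- by move=> _ -> [u _].
- exact: sigma_cylinders_level.
- apply: sigma_subfamily; exact: path_sigma_height_at_least.
Qed.

Lemma survival_succ_le m : survival m.+1 <= mu * survival m.
Proof.
rewrite -lee_fin -(P_tree_height_ge 1).
pose root_eq k := [set w | Y (Some (1%N, [::])) w = k].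
have := measure_le_sum_level_sets P (measurable_tree_height_ge 1 m.+1)
  (mY (Some (1%N, [::]))).
move/le_trans; apply.
apply: (@le_trans _ _ (\sum_(k <oo) (k%:R * (p k * survival m))%:E)%E).
  apply: lee_nneseries => // k _.
  rewrite -[X in X%:R](size_iota 0 k).
  apply: (measure_le_cover (F := fun i => root_eq k `&`
    subfamily Y (subtree_index 1 i) @^-1` height_at_least m)).
  - exact: measurableI (measurable_tree_height_ge _ _) (mY _ _).
  - move=> i; apply: measurableI; first exact: mY.
    apply: measurable_subfamily => //; exact: path_sigma_height_at_least.
  - move=> w [/height_ge_S[i ilt hi] /= Yk]; exists i; last by split.
    by rewrite mem_iota add0n -Yk.
  - by move=> i _; rewrite P_root_subtree.
rewrite (@eseries_EFin _ _ (mu * survival m)) //.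
rewrite (_ : series _ = (fun n => series (fun k => k%:R * p k) n * survival m)).
  exact: cvgMr_tmp.
by apply/funext => n; rewrite /series /= big_distrl; apply: eq_bigr => k _; rewrite mulrA.
Qed.

Lemma survival_le_expr m : survival m <= mu ^+ m.
Proof.
elim: m => [|m IHm]; first exact: survival_le1.
by apply: le_trans (survival_succ_le m) _; rewrite exprS ler_wpM2l // ltW.
Qed.

Lemma survival_cvg0 : mu < 1 -> survival @ \oo --> 0.
Proof.
move=> mu_lt1; apply: (@squeeze_cvgr _ _ _ _ (fun=> 0) (fun m => mu ^+ m)).
- by apply: nearW => m; rewrite survival_ge0 survival_le_expr.
- exact: cvg_cst.
- by apply: cvg_expr; rewrite ger0_norm // ltW.
Qed.

Lemma measurable_Nm m (Q : set nat) : measurable [set w | Q (Nm Y m w)].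
Proof.
rewrite (_ : [set w | _] = \bigcup_k ([set w | Y None w = k] `&`
    [set w | Q (\sum_(j <- index_iota 1 k) asbool (tree_height_ge j m w))%N])).
  apply: bigcup_measurable => k _; apply: measurableI; first exact: mY.
  by apply: measurable_count => j; exact: measurable_tree_height_ge.
apply/seteqP; split=> w /=; first by move=> QN; exists (Y None w).
by move=> [k _ [/= <-]].
Qed.

Lemma P_star_tree k j m :
  P ([set w | Y None w = k] `&` tree_height_ge j m) =
  (size_biased p mu k * survival m)%:E.
Proof.
rewrite (@sigma_cylinders_indep _ _ _ _ _ _ mY indepY [set None] (range (tree_index j))).
- by rewrite law_star P_tree_height_ge.
- by move=> _ -> [u _].
- exact: sigma_cylinders_level.
- exact: sigma_tree_height_ge.
Qed.

Lemma P_star_tree2 k i j m : i != j ->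
  P ([set w | Y None w = k] `&` tree_height_ge i m `&` tree_height_ge j m) =
  (size_biased p mu k * survival m ^+ 2)%:E.
Proof.
move=> ij; rewrite (@sigma_cylinders_indep3 _ _ _ _ _ _ mY indepY [set None]
  (range (tree_index i)) (range (tree_index j))).
- by rewrite law_star !P_tree_height_ge -!EFinM -mulrA expr2.
- by move=> _ -> [u _].
- by move=> _ -> [u _].
- by move=> _ [u _ <-] [v _ [ji _]]; move: ij; rewrite ji eqxx.
- exact: sigma_cylinders_level.
- exact: sigma_tree_height_ge.
- exact: sigma_tree_height_ge.
Qed.

Lemma size_biased_ge0 k : 0 <= size_biased p mu k.
Proof. by rewrite divr_ge0 ?mulr_ge0 // ltW. Qed.

Lemma measurable_Nm_star (Q : set nat) m k :
  measurable ([set w | Q (Nm Y m w)] `&` [set w | Y None w = k]).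
Proof. exact: measurableI (measurable_Nm _ _) (mY _ _). Qed.

Lemma P_Nm_ge1_star_le m k :
  (P ([set w | (1 <= Nm Y m w)%N] `&` [set w | Y None w = k]) <=
   ((k.-1)%:R * (size_biased p mu k * survival m))%:E)%E.
Proof.
rewrite -subn1 -(size_iota 1 (k - 1)).
apply: (measure_le_cover (F := fun j => [set w | Y None w = k] `&` tree_height_ge j m)).
- exact: (measurable_Nm_star (fun n => 1 <= n)%N).
- by move=> j; apply: measurableI; [exact: mY | exact: measurable_tree_height_ge].
- move=> w [/= + Yk]; rewrite /Nm Yk => /sum_bool_gt0[j jk /asboolP tj].
  by exists j.
- by move=> j _; rewrite P_star_tree.
Qed.

Lemma P_Nm_ge2_star_le m k :
  (P ([set w | (2 <= Nm Y m w)%N] `&` [set w | Y None w = k]) <=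
   ((k.-1 * k.-1)%:R * (size_biased p mu k * survival m ^+ 2))%:E)%E.
Proof.
pose r := [seq (i, j) | i <- index_iota 1 k, j <- index_iota 1 k].
have -> : (k.-1 * k.-1)%N = size r by rewrite size_allpairs /index_iota size_iota subn1.
apply: (measure_le_cover (F := fun ij => if ij.1 == ij.2 then set0 else
  [set w | Y None w = k] `&` tree_height_ge ij.1 m `&` tree_height_ge ij.2 m)).
- exact: (measurable_Nm_star (fun n => 2 <= n)%N).
- move=> [i j] /=; case: eqP => _ //.
  apply: measurableI; last exact: measurable_tree_height_ge.
  by apply: measurableI; [exact: mY | exact: measurable_tree_height_ge].
- move=> w [/= + Yk]; rewrite /Nm Yk => /sum_bool_gt1[|i [j [ik jk ij ti tj]]].
    exact: iota_uniq.
  exists (i, j); first exact: allpairs_f.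
  by rewrite /= (negbTE ij); split; [split|]; [|exact/asboolP..].
- move=> [i j] _ /=; case: eqP => [_ | /eqP ij]; last by rewrite P_star_tree2.
  by rewrite measure0 lee_fin mulr_ge0 ?size_biased_ge0 ?exprn_ge0 ?survival_ge0.
Qed.

Lemma P_star_le_Nm_ge1 m k : (1 < k)%N ->
  ((size_biased p mu k * survival m)%:E <= P [set w | (1 <= Nm Y m w)%N])%E.
Proof.
move=> k_gt1; rewrite -(P_star_tree k 1); apply: le_measure; rewrite ?inE.
- by apply: measurableI; [exact: mY | exact: measurable_tree_height_ge].
- exact: (measurable_Nm m (fun n => 1 <= n)%N).
- by move=> w [/= Yk t1]; rewrite /Nm Yk big_ltn //= asboolT.
Qed.

Lemma exists_size_biased_gt1 m : (0 < P [set w | (1 <= Nm Y m w)%N])%E ->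
  exists2 k, (1 < k)%N & 0 < size_biased p mu k.
Proof.
move=> N_pos; apply: contrapT => no_k.
have bound0 k : (k.-1)%:R * (size_biased p mu k * survival m) = 0.
  have [k_gt1|] := ltnP 1 k; last by case: k => [|[]] // _; rewrite !mul0r.
  suff -> : size_biased p mu k = 0 by rewrite mul0r mulr0.
  apply/eqP; rewrite eq_le size_biased_ge0 andbT leNgt; apply/negP => sb_pos.
  by apply: no_k; exists k.
have sum0 : (\sum_(k <oo)
    P ([set w | (1 <= Nm Y m w)%N] `&` [set w | Y None w = k]) = 0)%E.
  apply: eseries0 => k _ _; apply/eqP; rewrite eq_le measure_ge0 andbT.
  by rewrite -[0%E](congr1 EFin (bound0 k)) P_Nm_ge1_star_le.
have := measure_le_sum_level_sets P (measurable_Nm m (fun n => 1 <= n)%N) (mY None).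
by rewrite sum0 leNgt N_pos.
Qed.

Lemma P_Nm_eq1 m : P [set w | Nm Y m w = 1%N] =
  (P [set w | (1 <= Nm Y m w)%N] - P [set w | (2 <= Nm Y m w)%N])%E.
Proof.
have sub : [set w | (2 <= Nm Y m w)%N] `<=` [set w | (1 <= Nm Y m w)%N].
  by move=> w /=; apply: leq_trans.
rewrite -(probability_setD_sub P (measurable_Nm m (fun n => 2 <= n)%N)
  (measurable_Nm m (fun n => 1 <= n)%N) sub).
congr (P _); apply/seteqP; split=> w /=.
  by move=> ->.
by case: (Nm Y m w) => [|[|n]] [] //.
Qed.

(* For k >= K use N(m) >= 1, for k < K the pair bound with (k - 1)^2 <= K k. *)
Lemma P_Nm_ge2_star_split m k K :
  (P ([set w | (2 <= Nm Y m w)%N] `&` [set w | Y None w = k]) <=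
   (survival m * (K%:R * survival m * (k%:R * size_biased p mu k) +
     (if (K <= k)%N then k%:R * size_biased p mu k else 0)))%:E)%E.
Proof.
set q := survival m; set sb := size_biased p mu k.
have q_ge0 : 0 <= q := survival_ge0 m.
have sb_ge0 : 0 <= sb := size_biased_ge0 k.
have [Kk | kK] := leqP K k.
  have ge1 : [set w | (2 <= Nm Y m w)%N] `&` [set w | Y None w = k] `<=`
      [set w | (1 <= Nm Y m w)%N] `&` [set w | Y None w = k].
    by move=> w [/= N2 Yk]; split=> //; exact: leq_trans N2.
  apply: le_trans (le_measure _ _ _ ge1) _; rewrite ?inE;
    try exact: (measurable_Nm_star (fun n => _ <= n)%N).
  apply: le_trans (P_Nm_ge1_star_le m k) _; rewrite lee_fin -/q -/sb.
  have k1 : (k.-1)%:R * (sb * q) <= k%:R * (sb * q).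
    by apply: ler_wpM2r; [exact: mulr_ge0 | rewrite ler_nat leq_pred].
  have : 0 <= q * (K%:R * q * (k%:R * sb)).
    by apply: mulr_ge0 => //; apply: mulr_ge0; [apply: mulr_ge0 | apply: mulr_ge0].
  nra.
apply: le_trans (P_Nm_ge2_star_le m k) _; rewrite lee_fin -/q -/sb addr0.
have kk : (k.-1 * k.-1)%:R <= (K * k)%:R :> R.
  by rewrite ler_nat leq_mul // (leq_trans (leq_pred k)) // ltnW.
have : (k.-1 * k.-1)%:R * (sb * q ^+ 2) <= (K * k)%:R * (sb * q ^+ 2).
  by apply: ler_wpM2r => //; apply: mulr_ge0 => //; exact: exprn_ge0.
by rewrite natrM; nra.
Qed.

Lemma P_Nm_ge2_le (S : R) m K :
  series (fun k => k%:R * size_biased p mu k) @ \oo --> S ->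
  (P [set w | (2 <= Nm Y m w)%N] <= (survival m * (K%:R * survival m * S +
     (S - series (fun k => k%:R * size_biased p mu k) K)))%:E)%E.
Proof.
move=> cvgS; set q := survival m; set r := fun k => k%:R * size_biased p mu k.
have := measure_le_sum_level_sets P (measurable_Nm m (fun n => 2 <= n)%N) (mY None).
move/le_trans; apply.
pose t k := q * (K%:R * q * r k + (if (K <= k)%N then r k else 0)).
apply: (@le_trans _ _ (\sum_(k <oo) (t k)%:E)%E).
  by apply: lee_nneseries => // k _; exact: P_Nm_ge2_star_split.
rewrite (@eseries_EFin _ _ (q * (K%:R * q * S + (S - series r K)))) //.
rewrite (_ : series t = (fun n => q * (K%:R * q * series r n +
    series (fun k => if (K <= k)%N then r k else 0) n))).
  by apply: cvgMl_tmp; apply: cvgD; [exact: cvgMl_tmp | exact: cvg_series_tail].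
by apply/funext => n; rewrite /series /= -big_distrr /= big_split /= -big_distrr.
Qed.

Lemma fin_num_P_Nm (Q : set nat) m : P [set w | Q (Nm Y m w)] \is a fin_num.
Proof. by rewrite fin_num_measure //; exact: measurable_Nm. Qed.

Lemma Nm_eq1_ratio m : (0 < P [set w | (1 <= Nm Y m w)%N])%E ->
  fine (P [set w | Nm Y m w = 1%N]) / fine (P [set w | (1 <= Nm Y m w)%N]) =
  1 - fine (P [set w | (2 <= Nm Y m w)%N]) / fine (P [set w | (1 <= Nm Y m w)%N]).
Proof.
move=> N_pos; have fin1 := fin_num_P_Nm (fun n => 1 <= n)%N m.
have fin2 := fin_num_P_Nm (fun n => 2 <= n)%N m.
rewrite P_Nm_eq1 fineB // mulrBl divff //.
by rewrite lt0r_neq0 // -lte_fin fineK.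
Qed.

Lemma Nm_ge2_ratio_cvg0 (S : R) : mu < 1 ->
  series (fun k => k%:R * size_biased p mu k) @ \oo --> S ->
  (forall m, (0 < P [set w | (1 <= Nm Y m w)%N])%E) ->
  (fun m => fine (P [set w | (2 <= Nm Y m w)%N]) /
            fine (P [set w | (1 <= Nm Y m w)%N])) @ \oo --> 0.
Proof.
move=> mu_lt1 S_cvg N_pos.
have r_ge0 k : 0 <= k%:R * size_biased p mu k by rewrite mulr_ge0 ?size_biased_ge0.
have [k0 k0_gt1 sb_k0] := exists_size_biased_gt1 (N_pos 0%N).
have EP (Q : set nat) m : P [set w | Q (Nm Y m w)] = (fine (P [set w | Q (Nm Y m w)]))%:E.
  by rewrite fineK // fin_num_P_Nm.
apply: (ratio_cvg0 (pi := size_biased p mu k0) (S := S) (q := survival)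
  (tail := fun K => S - series (fun k => k%:R * size_biased p mu k) K)).
- exact: sb_k0.
- by have := series_le_lim r_ge0 S_cvg 0%N; rewrite /series /= big_geq.
- exact: survival_cvg0.
- by rewrite -(subrr S); apply: cvgB => //; exact: cvg_cst.
- exact: survival_ge0.
- by move=> K; rewrite subr_ge0; exact: series_le_lim.
- by move=> m; rewrite -lte_fin -(EP (fun n => 1 <= n)%N).
- by move=> m; exact: fine_ge0.
- move=> m; rewrite -lee_fin -(EP (fun n => 1 <= n)%N).
  exact: P_star_le_Nm_ge1.
- move=> m K; rewrite -lee_fin -(EP (fun n => 2 <= n)%N).
  exact: P_Nm_ge2_le.
Qed.

End galton_watson.

Theorem lemma3p1 (d : measure_display) (T : measurableType d) (R : realType)
  (P : probability T R) (p : nat -> R) (mu sigma2 : R)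
  (Y : gw_index -> T -> nat) :
  (forall k, 0 <= p k) ->
  series p @ \oo --> (1 : R) ->
  series (fun k => k%:R * p k) @ \oo --> mu ->
  0 < mu < 1 ->
  (* sigma^2 < oo : the variance series converges to a real number *)
  series (fun k => (k%:R - mu) ^+ 2 * p k) @ \oo --> sigma2 ->
  0 < sigma2 ->
  (forall i k, measurable [set w | Y i w = k]) ->
  mutually_independent P Y ->
  (forall k, P [set w | Y None w = k] = (k%:R * p k / mu)%:E) ->
  (forall j u k, P [set w | Y (Some (j, u)) w = k] = (p k)%:E) ->
  (* the conditioning events have positive probability *)
  (forall m, (0 < P [set w | (1 <= Nm Y m w)%N])%E) ->
  (fun m => fine (P [set w | Nm Y m w = 1%N]) / fine (P [set w | (1 <= Nm Y m w)%N]))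
    @ \oo --> (1 : R).
Proof.
move=> p_ge0 sum_p mean_p /andP[mu_gt0 mu_lt1] var_p _ mY indepY law_star law_tree N_pos.
have ratio0 := Nm_ge2_ratio_cvg0 p_ge0 mean_p mu_gt0 mY indepY law_star law_tree mu_lt1
  (size_biased_mean_cvg (lt0r_neq0 mu_gt0) sum_p mean_p var_p) N_pos.
rewrite (funext (fun m => Nm_eq1_ratio mY (N_pos m))) -[X in _ --> X](subr0 (1 : R)).
by apply: cvgB => //; exact: cvg_cst.
Qed.
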